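(* Let $\{\mathbf{x}^k\}$ be generated by Algorithm 2 under the bounded-delay assumption, and let $k\ge0$. Then for any $\alpha>0$ and any $\mathbf{x}$ independent of $i_k$, $$\begin{aligned}\mathbb{E}_{i_k}\big\langle\nabla_{i_k} f(\hat{\mathbf{x}}^k),\mathbf{x}_{i_k}^{k+1}-\mathbf{x}_{i_k}\big\rangle\ge\ &\mathbb{E}_{i_k}\big[f(\mathbf{x}^{k+1})-f(\mathbf{x})\big]-\Big(1-\frac1m\Big)\big[f(\mathbf{x}^k)-f(\mathbf{x})\big]-\tfrac12\mathbb{E}_{i_k}\|\mathbf{x}^{k+1}-\mathbf{x}^k\|_{\mathbf{L}+\alpha L_c\mathbf{I}}^2\\&-\frac{\kappa L_r\tau/\alpha+2L_r\tau}{2m}\sum_{d=k-\tau}^{k-1}\|\mathbf{x}^{d+1}-\mathbf{x}^d\|^2-\frac{1}{2m}\sum_{d=k-\tau}^{k-1}\|\mathbf{x}^{d+1}-\mathbf{x}^d\|_{\mathbf{L}}^2,\end{aligned}$$ where $L_c=\max_iL_i$, $\kappa=L_r/L_c$, and $\mathbf{x}^d:=\mathbf{x}^0$ for $d<0$.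
   Context: Problem: $\min_{\mathbf{x}} F(\mathbf{x}):=f(\mathbf{x})+g(\mathbf{x})$ s.t. $\mathbf{A}\mathbf{x}=\mathbf{b}$, where $\mathbf{x}=(\mathbf{x}_1;\ldots;\mathbf{x}_m)$ with blocks $\mathbf{x}_i\in\mathbb{R}^{n_i}$, $g(\mathbf{x})=\sum_{i=1}^m g_i(\mathbf{x}_i)$, $\mathbf{A}=[\mathbf{A}_1,\ldots,\mathbf{A}_m]$ with $\mathbf{A}_i\in\mathbb{R}^{q\times n_i}$, $\mathbf{b}\in\mathbb{R}^q$; $f$ is convex and continuously differentiable, each $g_i$ is proper, convex, lower semicontinuous. $\mathbf{U}_i\mathbf{y}$ denotes the vector whose $i$-th block is $\mathbf{y}_i$ and other blocks zero; $\|\mathbf{z}\|_{\mathbf{M}}^2=\mathbf{z}^\top\mathbf{M}\mathbf{z}$. Assumption (gradient Lipschitz continuity): there are constants $L_i>0$ and $L_r$ with $\|\nabla_i f(\mathbf{x}+\mathbf{U}_i\mathbf{y})-\nabla_i f(\mathbf{x})\|\le L_i\|\mathbf{y}_i\|$ and $\|\nabla f(\mathbf{x}+\mathbf{U}_i\mathbf{y})-\nabla f(\mathbf{x})\|\le L_r\|\mathbf{y}_i\|$ for all $i,\mathbf{x},\mathbf{y}$. $\mathbf{L}=\mathrm{blkdiag}(L_1\mathbf{I}_{n_1},\ldots,L_m\mathbf{I}_{n_m})$. Algorithm 2 (async-parallel randomized primal-dual block update, as analyzed): choose $\mathbf{x}^0$, $\boldsymbol{\lambda}^0=\mathbf{0}$,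 $\mathbf{r}^0=\mathbf{A}\mathbf{x}^0-\mathbf{b}$, $\beta>0,\rho>0$, symmetric PSD $\mathbf{P}_i$. At iteration $k$, a block index $i_k\in\{1,\ldots,m\}$ and a (possibly outdated) point $\hat{\mathbf{x}}^k$ are used; $\mathbf{x}_i^{k+1}=\mathbf{x}_i^k$ for $i\ne i_k$ and $$\mathbf{x}_{i_k}^{k+1}\in\arg\min_{\mathbf{x}_{i_k}}\big\langle\nabla_{i_k} f(\hat{\mathbf{x}}^k)-\mathbf{A}_{i_k}^\top(\boldsymbol{\lambda}^k-\beta\mathbf{r}^k),\mathbf{x}_{i_k}\big\rangle+g_{i_k}(\mathbf{x}_{i_k})+\tfrac12\|\mathbf{x}_{i_k}-\mathbf{x}_{i_k}^k\|_{\mathbf{P}_{i_k}}^2;$$ then $\mathbf{r}^{k+1}=\mathbf{r}^k+\mathbf{A}_{i_k}(\mathbf{x}_{i_k}^{k+1}-\mathbf{x}_{i_k}^k)$ and $\boldsymbol{\lambda}^{k+1}=\boldsymbol{\lambda}^k-\rho\mathbf{r}^{k+1}$. Conditionally on the history before iteration $k$ (which determines $\mathbf{x}^k,\mathbf{r}^k,\boldsymbol{\lambda}^k$ and $\hat{\mathbf{x}}^k$), $i_k$ is uniformly distributed on $\{1,\ldots,m\}$; $\mathbb{E}_{i_k}$ denotes this conditional expectation, and ''$\mathbf{x}$ independent of $i_k$'' means $\mathbf{x}$ is determined by that history. Assumption (bounded delay): there is an integer $\tau\ge0$ such that $\hat{\mathbf{x}}^k=\mathbf{x}^k+\sum_{d\in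 J(k)}(\mathbf{x}^d-\mathbf{x}^{d+1})$ for some subset $J(k)\subseteq\{k-\tau,\ldots,k-1\}$. *)

From Stdlib Require Import Reals.
From mathcomp Require Import all_boot.
Set Implicit Arguments.
Unset Strict Implicit.
Unset Printing Implicit Defensive.

Local Open Scope R_scope.

Definition bvec (n : nat) := 'I_n -> R.
Definition vec (m : nat) (n : 'I_m -> nat) := forall i : 'I_m, bvec (n i).

Definition bdot (n : nat) (u v : bvec n) : R := \big[Rplus/R0]_(j < n) (u j * v j).
Definition bnorm2 (n : nat) (u : bvec n) : R := bdot u u.
Definition bnorm (n : nat) (u : bvec n) : R := sqrt (bnorm2 u).
Definition bsub (n : nat) (u v : bvec n) : bvec n := fun j => u j - v j.

Definition dot (m : nat) (n : 'I_m -> nat) (x y : vec n) : R :=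
  \big[Rplus/R0]_(i < m) bdot (x i) (y i).
Definition norm2 (m : nat) (n : 'I_m -> nat) (x : vec n) : R := dot x x.
Definition norm (m : nat) (n : 'I_m -> nat) (x : vec n) : R := sqrt (norm2 x).
Definition vadd (m : nat) (n : 'I_m -> nat) (x y : vec n) : vec n :=
  fun i j => x i j + y i j.
Definition vsub (m : nat) (n : 'I_m -> nat) (x y : vec n) : vec n :=
  fun i j => x i j - y i j.
Definition vscale (m : nat) (n : 'I_m -> nat) (t : R) (x : vec n) : vec n :=
  fun i j => t * x i j.

Definition Ublk (m : nat) (n : 'I_m -> nat) (i : 'I_m) (y : vec n) : vec n :=
  fun l => if l == i then y l else (fun _ => 0).

(* ||z||_M^2 for the block-diagonal M = blkdiag(w_1 I_{n_1}, ..., w_m I_{n_m}) *)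
Definition wnorm2 (m : nat) (n : 'I_m -> nat) (w : 'I_m -> R) (z : vec n) : R :=
  \big[Rplus/R0]_(i < m) (w i * bnorm2 (z i)).

Definition bquad (n : nat) (P : 'I_n -> 'I_n -> R) (z : bvec n) : R :=
  \big[Rplus/R0]_(a < n) \big[Rplus/R0]_(c < n) (z a * P a c * z c).

Definition sym_mx (n : nat) (P : 'I_n -> 'I_n -> R) : Prop :=
  forall a c, P a c = P c a.
Definition psd_mx (n : nat) (P : 'I_n -> 'I_n -> R) : Prop :=
  forall z : bvec n, 0 <= bquad P z.

Definition convex_fun (m : nat) (n : 'I_m -> nat) (f : vec n -> R) : Prop :=
  forall (x y : vec n) (t : R), 0 <= t <= 1 ->
    f (vadd (vscale t x) (vscale (1 - t) y)) <= t * f x + (1 - t) * f y.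

Definition has_gradient (m : nat) (n : 'I_m -> nat) (f : vec n -> R)
  (gradf : vec n -> vec n) : Prop :=
  forall (x : vec n) (eps : R), 0 < eps -> exists delta, 0 < delta /\
    forall y : vec n, norm (vsub y x) < delta ->
      Rabs (f y - f x - dot (gradf x) (vsub y x)) <= eps * norm (vsub y x).

Definition continuous_map (m : nat) (n : 'I_m -> nat) (G : vec n -> vec n) : Prop :=
  forall (x : vec n) (eps : R), 0 < eps -> exists delta, 0 < delta /\
    forall y : vec n, norm (vsub y x) < delta -> norm (vsub (G y) (G x)) < eps.

(* None stands for +oo *)
Definition ext_gt (v : option R) (c : R) : Prop :=
  match v with Some a => c < a | None => True end.

Definition proper_fun (n : nat) (g : bvec n -> option R) : Prop :=
  exists z a, g z = Some a.

(* convexity of the (never -oo) extended-valued function: epigraph convexity *)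
Definition convex_ext (n : nat) (g : bvec n -> option R) : Prop :=
  forall (u v : bvec n) (a c t : R), g u = Some a -> g v = Some c -> 0 <= t <= 1 ->
    exists e, g (fun j => t * u j + (1 - t) * v j) = Some e /\ e <= t * a + (1 - t) * c.

Definition lsc_ext (n : nat) (g : bvec n -> option R) : Prop :=
  forall (z : bvec n) (c : R), ext_gt (g z) c ->
    exists delta, 0 < delta /\
      forall w : bvec n, bnorm (bsub w z) < delta -> ext_gt (g w) c.

Definition Amul (q n : nat) (Ai : 'I_q -> 'I_n -> R) (z : bvec n) : 'I_q -> R :=
  fun s => \big[Rplus/R0]_(j < n) (Ai s j * z j).
Definition Atmul (q n : nat) (Ai : 'I_q -> 'I_n -> R) (v : 'I_q -> R) : bvec n :=
  fun j => \big[Rplus/R0]_(s < q) (Ai s j * v s).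
Definition Afull (m : nat) (n : 'I_m -> nat) (q : nat)
  (A : forall i : 'I_m, 'I_q -> 'I_(n i) -> R) (x : vec n) : 'I_q -> R :=
  fun s => \big[Rplus/R0]_(i < m) Amul (A i) (x i) s.

Definition is_argmin (n : nat) (c : bvec n) (g : bvec n -> option R)
  (P : 'I_n -> 'I_n -> R) (xk : bvec n) (z : bvec n) : Prop :=
  exists gz, g z = Some gz /\
    forall (w : bvec n) (gw : R), g w = Some gw ->
      bdot c z + gz + / 2 * bquad P (bsub z xk)
      <= bdot c w + gw + / 2 * bquad P (bsub w xk).

Definition x_update (m : nat) (n : 'I_m -> nat) (q : nat)
  (gradf : vec n -> vec n) (g : forall i : 'I_m, bvec (n i) -> option R)
  (A : forall i : 'I_m, 'I_q -> 'I_(n i) -> R)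
  (P : forall i : 'I_m, 'I_(n i) -> 'I_(n i) -> R) (beta : R)
  (i : 'I_m) (xk xhatk : vec n) (rk lamk : 'I_q -> R) (xnew : vec n) : Prop :=
  (forall l : 'I_m, l != i -> forall j, xnew l j = xk l j) /\
  is_argmin (fun j => gradf xhatk i j - Atmul (A i) (fun s => lamk s - beta * rk s) j)
            (g i) (P i) (xk i) (xnew i).

(* conditional expectation over i_k uniform on {1..m} *)
Definition Eik (m : nat) (Phi : 'I_m -> R) : R :=
  / INR m * \big[Rplus/R0]_(j < m) Phi j.

Definition Lmax (m : nat) (L : 'I_m -> R) : R := \big[Rmax/R0]_(i < m) L i.

From HB Require Import structures.
From Stdlib Require Import Reals Lra Lia FunctionalExtensionality.
From mathcomp Require Import all_boot zify.

(* For each block j, the block descent lemma at x^k bounds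
   f(x^{k+1}) from above by the linearisation at x^k; replacing the gradient
   at x^k by the stale gradient at x̂^k costs a Young term in
   ||∇f(x^k) - ∇f(x̂^k)||.  Averaging over j leaves <∇f(x̂^k), x^k - x>,
   which convexity at x̂^k and a descent estimate along the path from x̂^k
   to x^k (one delayed single-block increment at a time, at most τ of them
   by bounded delay) turn into f(x^k) - f(x) minus the delay terms; the same
   path bounds ||∇f(x^k) - ∇f(x̂^k)||² by τ L_r² Σ ||x^{d+1} - x^d||². *)

Set Implicit Arguments.
Unset Strict Implicit.
Unset Printing Implicit Defensive.

Local Open Scope R_scope.

HB.instance Definition _ := Monoid.isComLaw.Build R R0 Rplus
  (fun a b c => esym (Rplus_assoc a b c)) Rplus_comm Rplus_0_l.

Section RealSums.
Variables (I : Type) (r : seq I) (P : pred I).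

Lemma sumZ (c : R) (F : I -> R) :
  \big[Rplus/R0]_(i <- r | P i) (c * F i) = c * \big[Rplus/R0]_(i <- r | P i) F i.
Proof.
apply: (big_ind2 (fun a b => a = c * b)); first by ring.
  by move=> a b a' b' -> ->; ring.
by [].
Qed.

Lemma sumN (F : I -> R) :
  \big[Rplus/R0]_(i <- r | P i) (- F i) = - \big[Rplus/R0]_(i <- r | P i) F i.
Proof.
apply: (big_ind2 (fun a b => a = - b)); first by ring.
  by move=> a b a' b' -> ->; ring.
by [].
Qed.

Lemma sum_lin2 (a c : R) (F G : I -> R) :
  \big[Rplus/R0]_(i <- r | P i) (a * F i + c * G i) =
  a * \big[Rplus/R0]_(i <- r | P i) F i + c * \big[Rplus/R0]_(i <- r | P i) G i.
Proof. by rewrite big_split !sumZ. Qed.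

Lemma sum_le (F G : I -> R) : (forall i, P i -> F i <= G i) ->
  \big[Rplus/R0]_(i <- r | P i) F i <= \big[Rplus/R0]_(i <- r | P i) G i.
Proof.
move=> H; apply: (big_ind2 (fun a b => a <= b)); first lra.
  by move=> a b a' b' ? ?; lra.
by [].
Qed.

Lemma sum_ge0 (F : I -> R) : (forall i, P i -> 0 <= F i) ->
  0 <= \big[Rplus/R0]_(i <- r | P i) F i.
Proof.
move=> H; apply: (big_ind (fun a => 0 <= a)); first lra.
  by move=> a b ? ?; lra.
by [].
Qed.

End RealSums.

Lemma iter_Rplus (p : nat) (c : R) : iter p (Rplus c) 0 = INR p * c.
Proof. by elim: p => [|p IH]; [rewrite /=; ring | rewrite S_INR /= IH; ring]. Qed.

Lemma sum_const_ord (m : nat) (c : R) : \big[Rplus/R0]_(j < m) c = INR m * c.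
Proof. by rewrite big_const_ord iter_Rplus. Qed.

Lemma sum_sub_const_ord (m : nat) (F : 'I_m -> R) (c : R) :
  \big[Rplus/R0]_(j < m) (F j - c) = \big[Rplus/R0]_(j < m) F j - INR m * c.
Proof. by rewrite /Rminus big_split /= sumN sum_const_ord. Qed.

Lemma sum_single (m : nat) (F : 'I_m -> R) (i : 'I_m) :
  (forall l, l != i -> F l = 0) -> \big[Rplus/R0]_(l < m) F l = F i.
Proof.
move=> H; rewrite (bigD1 i) //= big1; first by rewrite Rplus_0_r.
by move=> l hl; apply: H.
Qed.

Lemma sum_nat_recr_cond (P : pred nat) (F : nat -> R) (p : nat) :
  \big[Rplus/R0]_(0 <= s < p.+1 | P s) F s =
  \big[Rplus/R0]_(0 <= s < p | P s) F s + (if P p then F p else 0).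
Proof. by rewrite !(big_mkcond P) big_nat_recr. Qed.

Lemma sum_nat_le_prefix (P : pred nat) (F : nat -> R) (p p' : nat) :
  (forall s, 0 <= F s) -> (p <= p')%N ->
  \big[Rplus/R0]_(0 <= s < p | P s) F s <= \big[Rplus/R0]_(0 <= s < p' | P s) F s.
Proof.
move=> hF hpp'.
rewrite [in X in _ <= X](big_cat_nat _ (n:=p)) //=.
have := @sum_ge0 _ (index_iota p p') P F (fun s _ => hF s); lra.
Qed.

Lemma sum_le_window (P : pred nat) (F : nat -> R) (k tau : nat) :
  (forall s, 0 <= F s) -> (forall s, P s -> (k <= s + tau)%N) ->
  \big[Rplus/R0]_(0 <= s < k | P s) F s <= \big[Rplus/R0]_((k - tau)%N <= s < k) F s.
Proof.
move=> hF hP.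
rewrite (big_cat_nat _ (n:=(k - tau)%N)) //=; last exact: leq_subr.
rewrite big1_seq; last first.
  move=> s /andP [Ps]; rewrite mem_index_iota => /andP [_ hs].
  by have := hP s Ps; move: hs; lia.
rewrite Rplus_0_l big_mkcond.
by apply: sum_le => s _; have := hF s; case: (P s) => ?; lra.
Qed.

Lemma Lmax_ge (m : nat) (L : 'I_m -> R) (j : 'I_m) : L j <= Lmax L.
Proof.
rewrite /Lmax; elim: (index_enum _) (mem_index_enum j) => [//|a s IH].
rewrite in_cons big_cons => /orP [/eqP <- | hj]; first exact: Rmax_l.
exact: Rle_trans (IH hj) (Rmax_r _ _).
Qed.

Lemma Eik_ge (m : nat) (Phi : 'I_m -> R) (c : R) : (0 < m)%N ->
  c <= \big[Rplus/R0]_(j < m) Phi j -> / INR m * c <= Eik Phi.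
Proof.
move=> hm hc; apply: Rmult_le_compat_l => //.
by apply: Rlt_le; apply: Rinv_0_lt_compat; apply: lt_0_INR; apply/ltP.
Qed.

Lemma cauchy_schwarz_quadratic (a b c : R) :
  (forall t, 0 <= a - 2 * t * c + t * t * b) -> 0 <= b -> c <= sqrt a * sqrt b.
Proof.
move=> H hb.
have ha : 0 <= a by have := H 0; lra.
have [b0|bn0] := Req_dec b 0.
  subst b; have [|cp] := Rle_dec c 0; first by rewrite sqrt_0; lra.
  have := H ((a + 1) / (2 * c)).
  have -> : a - 2 * ((a + 1) / (2 * c)) * c + (a + 1) / (2 * c) * ((a + 1) / (2 * c)) * 0
    = -1 by field; lra.
  lra.
have := H (c / b).
have -> : a - 2 * (c / b) * c + c / b * (c / b) * b = (a * b - c * c) / b by field.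
move=> h1.
have h2 : c * c <= a * b.
  have : 0 <= (a * b - c * c) / b * b by apply: Rmult_le_pos => //; lra.
  have -> : (a * b - c * c) / b * b = a * b - c * c by field.
  lra.
have [|cp] := Rle_dec c 0; first by have := sqrt_pos a; have := sqrt_pos b; nra.
rewrite -sqrt_mult // -(sqrt_Rsqr c); last lra.
by apply: sqrt_le_1_alt; rewrite /Rsqr.
Qed.

Lemma young (a b c : R) : 0 < c -> a * b <= a * a / (2 * c) + c / 2 * (b * b).
Proof.
move=> hc.
have -> : a * a / (2 * c) + c / 2 * (b * b) = a * b + (a - c * b) * (a - c * b) / (2 * c)
  by field; lra.
have : 0 <= (a - c * b) * (a - c * b) / (2 * c).
  apply: Rmult_le_pos; first exact: Rle_0_sqr.
  by apply: Rlt_le; apply: Rinv_0_lt_compat; lra.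
lra.
Qed.

Lemma sqrt_young (N S b : R) : 0 <= N -> 0 <= S -> 0 <= b ->
  sqrt (N * S) * sqrt b <= / 2 * (S + N * b).
Proof.
move=> hN hS hb; rewrite sqrt_mult_alt //.
have h1 := sqrt_sqrt N hN; have h2 := sqrt_sqrt S hS; have h3 := sqrt_sqrt b hb.
have := Rle_0_sqr (sqrt S - sqrt N * sqrt b); rewrite /Rsqr.
have -> : (sqrt S - sqrt N * sqrt b) * (sqrt S - sqrt N * sqrt b) =
  sqrt S * sqrt S - 2 * (sqrt N * sqrt S * sqrt b) + (sqrt N * sqrt N) * (sqrt b * sqrt b)
  by ring.
rewrite h1 h2 h3; lra.
Qed.

Lemma sqrt_sq_scale (c a : R) : 0 <= a -> sqrt (c * c * a) = Rabs c * sqrt a.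
Proof. by move=> ha; rewrite sqrt_mult_alt ?sqrt_Rsqr_abs; last nra. Qed.

Lemma le_of_sqrt_le (a b c : R) : 0 <= a -> 0 <= b ->
  sqrt a <= c * sqrt b -> a <= c * c * b.
Proof.
move=> ha hb h.
rewrite -(sqrt_sqrt a ha) -(sqrt_sqrt b hb).
have := sqrt_pos a; have := sqrt_pos b; nra.
Qed.

Section BlockInner.

Lemma bdot_sym (k : nat) (u v : bvec k) : bdot u v = bdot v u.
Proof. by apply: eq_bigr => j _; ring. Qed.

Lemma bdot_lin (k : nat) (a c : R) (u v w : bvec k) :
  bdot (fun j => a * u j + c * v j) w = a * bdot u w + c * bdot v w.
Proof. by rewrite /bdot -sum_lin2; apply: eq_bigr => j _; ring. Qed.

Lemma bdot0r (k : nat) (u : bvec k) : bdot u (fun _ => 0) = 0.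
Proof. by rewrite /bdot big1 // => j _; ring. Qed.

Lemma bdot_scale_r (k : nat) (u v : bvec k) (c : R) :
  bdot u (fun j => c * v j) = c * bdot u v.
Proof. by rewrite /bdot -sumZ; apply: eq_bigr => j _; ring. Qed.

Lemma bdot_sub_l (k : nat) (u v w : bvec k) : bdot u w - bdot v w = bdot (bsub u v) w.
Proof.
have -> : bsub u v = (fun j => 1 * u j + (-1) * v j).
  by apply: functional_extensionality => j; rewrite /bsub; ring.
by rewrite bdot_lin; ring.
Qed.

Lemma bdot_sub_r (k : nat) (u v w : bvec k) : bdot u (bsub v w) = bdot u v - bdot u w.
Proof. by rewrite bdot_sym -bdot_sub_l !(bdot_sym u). Qed.

Lemma bnorm2_ge0 (k : nat) (u : bvec k) : 0 <= bnorm2 u.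
Proof. by apply: sum_ge0 => j _; nra. Qed.

Lemma bnorm2_sub_scale (k : nat) (u v : bvec k) (t : R) :
  bnorm2 (fun j => u j - t * v j) = bnorm2 u - 2 * t * bdot u v + t * t * bnorm2 v.
Proof.
have -> : (fun j => u j - t * v j) = (fun j => 1 * u j + (- t) * v j).
  by apply: functional_extensionality => j; ring.
rewrite /bnorm2 !bdot_lin [bdot u _]bdot_sym [bdot v _]bdot_sym !bdot_lin [bdot v u]bdot_sym.
ring.
Qed.

Lemma bdot_cs (k : nat) (u v : bvec k) : bdot u v <= bnorm u * bnorm v.
Proof.
apply: cauchy_schwarz_quadratic; last exact: bnorm2_ge0.
by move=> t; rewrite -bnorm2_sub_scale; apply: bnorm2_ge0.
Qed.

Lemma bnorm_scale (k : nat) (c : R) (u : bvec k) :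
  bnorm (fun j => c * u j) = Rabs c * bnorm u.
Proof.
rewrite /bnorm -sqrt_sq_scale; last exact: bnorm2_ge0.
by congr sqrt; rewrite /bnorm2 /bdot -sumZ; apply: eq_bigr => j _; ring.
Qed.

End BlockInner.

Section Inner.
Variables (m : nat) (n : 'I_m -> nat).

Lemma vec_ext (x y : vec n) : (forall i j, x i j = y i j) -> x = y.
Proof.
move=> H; apply: functional_extensionality_dep => i.
by apply: functional_extensionality => j; apply: H.
Qed.

Lemma dot_sym (x y : vec n) : dot x y = dot y x.
Proof. by apply: eq_bigr => i _; apply: bdot_sym. Qed.

Lemma dot_lin (a c : R) (x y z : vec n) :
  dot (fun i j => a * x i j + c * y i j) z = a * dot x z + c * dot y z.
Proof. by rewrite /dot -sum_lin2; apply: eq_bigr => i _; rewrite bdot_lin. Qed.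

Lemma dot_scale_r (x y : vec n) (c : R) : dot x (vscale c y) = c * dot x y.
Proof. by rewrite /dot -sumZ; apply: eq_bigr => i _; apply: bdot_scale_r. Qed.

Lemma dot_add_r (G a b : vec n) : dot G (vadd a b) = dot G a + dot G b.
Proof.
have -> : vadd a b = (fun i j => 1 * a i j + 1 * b i j).
  by apply: vec_ext => i j; rewrite /vadd; ring.
by rewrite dot_sym dot_lin (dot_sym a) (dot_sym b); ring.
Qed.

Lemma dot_sub_l (a b c : vec n) : dot a c - dot b c = dot (vsub a b) c.
Proof.
have -> : vsub a b = (fun i j => 1 * a i j + (-1) * b i j).
  by apply: vec_ext => i j; rewrite /vsub; ring.
by rewrite dot_lin; ring.
Qed.

Lemma dot_sub_r (G a b : vec n) : dot G (vsub a b) = dot G a - dot G b.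
Proof. by rewrite dot_sym -dot_sub_l !(dot_sym _ G). Qed.

Lemma dot_sub_self (G a : vec n) : dot G (vsub a a) = 0.
Proof. by rewrite dot_sub_r; ring. Qed.

Lemma norm2_ge0 (x : vec n) : 0 <= norm2 x.
Proof. by apply: sum_ge0 => i _; apply: bnorm2_ge0. Qed.

Lemma norm2_sub_self (a : vec n) : norm2 (vsub a a) = 0.
Proof. exact: dot_sub_self. Qed.

Lemma norm2_sub_scale (x y : vec n) (t : R) :
  norm2 (fun i j => x i j - t * y i j) = norm2 x - 2 * t * dot x y + t * t * norm2 y.
Proof.
have -> : (fun i j => x i j - t * y i j) = (fun i j => 1 * x i j + (- t) * y i j).
  by apply: vec_ext => i j; ring.
rewrite /norm2 !dot_lin [dot x _]dot_sym [dot y _]dot_sym !dot_lin [dot y x]dot_sym.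
ring.
Qed.

Lemma norm2_add (x y : vec n) : norm2 (vadd x y) = norm2 x + 2 * dot x y + norm2 y.
Proof.
have -> : vadd x y = (fun i j => x i j - (-1) * y i j).
  by apply: vec_ext => i j; rewrite /vadd; ring.
by rewrite norm2_sub_scale; ring.
Qed.

Lemma dot_cs (x y : vec n) : dot x y <= norm x * norm y.
Proof.
apply: cauchy_schwarz_quadratic; last exact: norm2_ge0.
by move=> t; rewrite -norm2_sub_scale; apply: norm2_ge0.
Qed.

Lemma norm_scale (c : R) (x : vec n) : norm (vscale c x) = Rabs c * norm x.
Proof.
rewrite /norm -sqrt_sq_scale; last exact: norm2_ge0.
congr sqrt; rewrite /norm2 /dot -sumZ; apply: eq_bigr => i _.
by rewrite /bdot -sumZ; apply: eq_bigr => j _; rewrite /vscale; ring.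
Qed.

(* Young splits the cross term as 2 √(N M) √T <= M + N T. *)
Lemma norm2_add_le (a b : vec n) (N M T : R) :
  0 <= N -> 0 <= M -> norm2 a <= N * M -> norm2 b <= T ->
  norm2 (vadd a b) <= (N + 1) * (M + T).
Proof.
move=> hN hM ha hb; rewrite norm2_add.
have hT : 0 <= T by have := norm2_ge0 b; lra.
have na : norm a <= sqrt (N * M) by apply: sqrt_le_1_alt.
have nb : norm b <= sqrt T by apply: sqrt_le_1_alt.
have : norm a * norm b <= sqrt (N * M) * sqrt T.
  by apply: Rmult_le_compat => //; apply: sqrt_pos.
have := sqrt_young hN hM hT; have := dot_cs a b; nra.
Qed.

Lemma Ublk_self (h : vec n) (i : 'I_m) : (Ublk i h : vec n) i = h i.
Proof. by rewrite /Ublk eqxx. Qed.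

Lemma bnorm_vscale (c : R) (x : vec n) (i : 'I_m) :
  bnorm ((vscale c x : vec n) i) = Rabs c * bnorm (x i).
Proof. exact: bnorm_scale. Qed.

Lemma dot_Ublk (G h : vec n) (i : 'I_m) : dot G (Ublk i h) = bdot (G i) (h i).
Proof.
rewrite /dot (@sum_single _ _ i) /Ublk ?eqxx //.
by move=> l hl; rewrite (negbTE hl) bdot0r.
Qed.

Lemma norm2_Ublk (h : vec n) (i : 'I_m) : norm2 (Ublk i h) = bnorm2 (h i).
Proof. by rewrite /norm2 dot_Ublk Ublk_self. Qed.

Lemma wnorm2_Ublk (w : 'I_m -> R) (h : vec n) (i : 'I_m) :
  wnorm2 w (Ublk i h) = w i * bnorm2 (h i).
Proof.
rewrite /wnorm2 (@sum_single _ _ i) /Ublk ?eqxx //.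
by move=> l hl; rewrite (negbTE hl) /bnorm2 bdot0r; ring.
Qed.

Lemma wnorm2_ge0 (w : 'I_m -> R) (h : vec n) : (forall i, 0 <= w i) -> 0 <= wnorm2 w h.
Proof. by move=> hw; apply: sum_ge0 => i _; apply: Rmult_le_pos; last exact: bnorm2_ge0. Qed.

Lemma Ublk_id (z : vec n) (i : 'I_m) :
  (forall l, l != i -> forall j, z l j = 0) -> Ublk i z = z.
Proof.
move=> H; apply: vec_ext => l j; rewrite /Ublk.
by case: eqP => [// | /eqP hl]; rewrite H.
Qed.

Lemma vadd_Ublk_vsub (y z : vec n) (i : 'I_m) :
  (forall l, l != i -> forall j, y l j = z l j) -> vadd z (Ublk i (vsub y z)) = y.
Proof.
move=> H; apply: vec_ext => l j; rewrite /vadd /Ublk /vsub.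
by case: eqP => [_ | /eqP hl]; [ring | rewrite H //; ring].
Qed.

Lemma Ublk_vsub_id (y z : vec n) (i : 'I_m) :
  (forall l, l != i -> forall j, y l j = z l j) -> Ublk i (vsub y z) = vsub y z.
Proof. by move=> H; apply: Ublk_id => l hl j; rewrite /vsub H //; ring. Qed.

End Inner.

Lemma deriv_le_secant (phi : R -> R) (l : R) : derivable_pt_lim phi 0 l ->
  (forall t, 0 < t <= 1 -> phi t <= t * phi 1 + (1 - t) * phi 0) ->
  l <= phi 1 - phi 0.
Proof.
move=> hd hconv; apply: Rnot_lt_le => hlt.
have [[del hdel] Hd] := hd (l - (phi 1 - phi 0)) ltac:(lra).
set t := Rmin 1 (del / 2).
have ht : 0 < t <= 1.
  by split; [apply: Rmin_pos; lra | exact: Rmin_l].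
have htd : Rabs t < del.
  by have : t <= del / 2 := Rmin_r _ _; rewrite Rabs_pos_eq; lra.
have := Hd t ltac:(lra) htd; rewrite Rplus_0_l => /Rabs_def2 [_ hlow].
have : (phi t - phi 0) / t <= phi 1 - phi 0.
  apply: (Rmult_le_reg_r t); first lra.
  have -> : (phi t - phi 0) / t * t = phi t - phi 0 by field; lra.
  have := hconv t ht; nra.
lra.
Qed.

Section Smooth.
Variables (m : nat) (n : 'I_m -> nat) (f : vec n -> R) (gradf : vec n -> vec n).
Arguments gradf : clear implicits.
Hypothesis hgrad : has_gradient f gradf.

Lemma line_deriv (z h : vec n) (t : R) :
  derivable_pt_lim (fun s => f (vadd z (vscale s h))) t
    (dot (gradf (vadd z (vscale t h))) h).
Proof.
move=> eps heps.
set w := fun s => vadd z (vscale s h).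
set K := norm h.
have hK : 0 <= K by apply: sqrt_pos.
have heps' : 0 < eps / (2 * (K + 1)) by apply: Rdiv_lt_0_compat; lra.
have [del [hdel Hd]] := hgrad (w t) heps'.
have hdK : 0 < del / (K + 1) by apply: Rdiv_lt_0_compat; lra.
exists (mkposreal _ hdK) => hh hh0 /= hhlt.
have ew : vsub (w (t + hh)) (w t) = vscale hh h.
  by apply: vec_ext => i j; rewrite /vsub /w /vadd /vscale; ring.
have hn : norm (vsub (w (t + hh)) (w t)) = Rabs hh * K by rewrite ew norm_scale.
have ah : 0 < Rabs hh by apply: Rabs_pos_lt.
have hlt : norm (vsub (w (t + hh)) (w t)) < del.
  rewrite hn; have := Rmult_lt_compat_r (K + 1) _ _ ltac:(lra) hhlt.
  have -> : del / (K + 1) * (K + 1) = del by field; lra.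
  nra.
have := Hd _ hlt; rewrite hn ew dot_scale_r.
set l := dot (gradf (w t)) h.
set a := f (w (t + hh)) - f (w t) - hh * l => Ha.
have -> : (f (w (t + hh)) - f (w t)) / hh - l = a / hh by rewrite /a; field.
apply: (Rmult_lt_reg_r (Rabs hh)) => //.
rewrite -Rabs_mult (_ : a / hh * hh = a); last by field.
have : eps / (2 * (K + 1)) * (Rabs hh * K) <= eps * Rabs hh / 2.
  apply: (Rmult_le_reg_r (2 * (K + 1))); first lra.
  have -> : eps / (2 * (K + 1)) * (Rabs hh * K) * (2 * (K + 1)) = eps * Rabs hh * K
    by field; lra.
  have -> : eps * Rabs hh / 2 * (2 * (K + 1)) = eps * Rabs hh * K + eps * Rabs hh by field.
  nra.
nra.
Qed.

Lemma convex_grad_le (hconv : convex_fun f) (x y : vec n) :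
  f y + dot (gradf y) (vsub x y) <= f x.
Proof.
set phi := fun s => f (vadd y (vscale s (vsub x y))).
have ephi : forall t, phi t = f (vadd (vscale t x) (vscale (1 - t) y)).
  by move=> t; rewrite /phi; congr f; apply: vec_ext => i j; rewrite /vadd /vscale /vsub; ring.
have phi1 : phi 1 = f x.
  by rewrite /phi; congr f; apply: vec_ext => i j; rewrite /vadd /vscale /vsub; ring.
have phi0 : phi 0 = f y.
  by rewrite /phi; congr f; apply: vec_ext => i j; rewrite /vadd /vscale /vsub; ring.
have hd : derivable_pt_lim phi 0 (dot (gradf y) (vsub x y)).
  have := line_deriv y (vsub x y) 0.
  have -> // : vadd y (vscale 0 (vsub x y)) = y.
  by apply: vec_ext => i j; rewrite /vadd /vscale; ring.
have := deriv_le_secant hd; rewrite phi0 phi1.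
suff : forall t, 0 < t <= 1 -> phi t <= t * f x + (1 - t) * f y by move=> hs /(_ hs); lra.
by move=> t [ht0 ht1]; rewrite ephi; apply: hconv; lra.
Qed.

Variable L : 'I_m -> R.
Hypothesis hL : forall (i : 'I_m) (y z : vec n),
  bnorm (bsub (gradf (vadd z (Ublk i y)) i) (gradf z i)) <= L i * bnorm (y i).

Lemma block_descent (z h : vec n) (i : 'I_m) :
  f (vadd z (Ublk i h)) <= f z + bdot (gradf z i) (h i) + L i / 2 * bnorm2 (h i).
Proof.
set w := fun s => vadd z (vscale s (Ublk i h)).
set l0 := bdot (gradf z i) (h i).
set b := bnorm2 (h i).
have w0 : w 0 = z by apply: vec_ext => l j; rewrite /w /vadd /vscale; ring.
have w1 : w 1 = vadd z (Ublk i h).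
  by apply: vec_ext => l j; rewrite /w /vadd /vscale; ring.
have ew : forall s, w s = vadd z (Ublk i (vscale s h)).
  by move=> s; apply: vec_ext => l j; rewrite /w /vadd /vscale /Ublk; case: eqP => _; ring.
set g := (mult_real_fct l0 id + mult_real_fct (L i / 2 * b) Rsqr)%F.
have D : forall c, derivable_pt_lim ((fun s => f (w s)) - g)%F c
    (bdot (gradf (w c) i) (h i) - (l0 * 1 + (L i / 2 * b) * (2 * c))).
  move=> c; apply: derivable_pt_lim_minus.
    by have := line_deriv z (Ublk i h) c; rewrite dot_Ublk; apply.
  apply: derivable_pt_lim_plus; apply: derivable_pt_lim_scal.
    exact: derivable_pt_lim_id.
  exact: derivable_pt_lim_Rsqr.
have [c [Hc [c0 c1]]] := MVT_cor2 _ _ 0 1 Rlt_0_1 (fun c _ => D c).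
have hlip : bnorm (bsub (gradf (w c) i) (gradf z i)) <= L i * (c * bnorm (h i)).
  by have := hL i (vscale c h) z; rewrite -ew bnorm_vscale Rabs_pos_eq //; lra.
have Hslope : bdot (gradf (w c) i) (h i) - l0 <= L i * c * b.
  rewrite /l0 bdot_sub_l; apply: Rle_trans (bdot_cs _ _) _.
  have -> : L i * c * b = L i * (c * bnorm (h i)) * bnorm (h i).
    by rewrite /b -(sqrt_sqrt _ (bnorm2_ge0 (h i))) /bnorm; ring.
  by apply: Rmult_le_compat_r; [apply: sqrt_pos | apply: hlip].
move: Hc; rewrite /g /minus_fct /plus_fct /mult_real_fct /id /Rsqr w0 w1; nra.
Qed.

(* Descent at [X], then Young's inequality with weight [c] to pass to the
   stale gradient at [Z]. *)
Lemma block_estimate (X Z Y : vec n) (j : 'I_m) (c : R) : 0 < c ->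
  (forall l, l != j -> forall jj, Y l jj = X l jj) ->
  f Y - f X - / 2 * wnorm2 (fun i => L i + c) (vsub Y X)
    - / (2 * c) * bnorm2 (bsub (gradf X j) (gradf Z j))
  <= bdot (gradf Z j) (bsub (Y j) (X j)).
Proof.
move=> hc hoff.
set D := bsub (Y j) (X j).
set E := bsub (gradf X j) (gradf Z j).
have hw : wnorm2 (fun i => L i + c) (vsub Y X) = (L j + c) * bnorm2 D.
  by rewrite -(Ublk_vsub_id hoff) wnorm2_Ublk.
have hdesc := block_descent X (vsub Y X) j.
rewrite vadd_Ublk_vsub // in hdesc.
have hyoung : bdot E D <= bnorm2 E / (2 * c) + c / 2 * bnorm2 D.
  apply: Rle_trans (bdot_cs _ _) _.
  by have := young (bnorm E) (bnorm D) hc; rewrite /bnorm !sqrt_sqrt //; apply: bnorm2_ge0.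
have := bdot_sub_l (gradf X j) (gradf Z j) D.
rewrite hw -/E; rewrite /Rdiv in hyoung hdesc *.
change (bsub (Y j) (X j)) with D; change ((vsub Y X : vec n) j) with D in hdesc.
lra.
Qed.

Lemma sum_block_estimates (X Z xx : vec n) (Y : 'I_m -> vec n) (c : R) : 0 < c ->
  (forall j l, l != j -> forall jj, Y j l jj = X l jj) ->
  \big[Rplus/R0]_(j < m) f (Y j) - INR m * f X
    - / 2 * \big[Rplus/R0]_(j < m) wnorm2 (fun i => L i + c) (vsub (Y j) X)
    - / (2 * c) * norm2 (vsub (gradf X) (gradf Z)) + dot (gradf Z) (vsub X xx)
  <= \big[Rplus/R0]_(j < m) bdot (gradf Z j) (bsub (Y j j) (xx j)).
Proof.
move=> hc hoff.
have hsplit : forall j, bdot (gradf Z j) (bsub (Y j j) (xx j)) =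
    bdot (gradf Z j) (bsub (Y j j) (X j)) + bdot (gradf Z j) (bsub (X j) (xx j)).
  by move=> j; rewrite !bdot_sub_r; ring.
rewrite (eq_bigr _ (fun j _ => hsplit j)) big_split /=.
have hsum : \big[Rplus/R0]_(j < m) (f (Y j) - f X
      - / 2 * wnorm2 (fun i => L i + c) (vsub (Y j) X)
      - / (2 * c) * bnorm2 (bsub (gradf X j) (gradf Z j)))
    <= \big[Rplus/R0]_(j < m) bdot (gradf Z j) (bsub (Y j j) (X j)).
  by apply: sum_le => j _; apply: block_estimate hc (hoff j).
rewrite /Rminus !big_split /= !sumN !sumZ sum_const_ord in hsum.
change (\big[Rplus/R0]_(j < m) bnorm2 (bsub (gradf X j) (gradf Z j)))
  with (norm2 (vsub (gradf X) (gradf Z))) in hsum.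
change (\big[Rplus/R0]_(j < m) bdot (gradf Z j) (bsub (X j) (xx j)))
  with (dot (gradf Z) (vsub X xx)).
lra.
Qed.

End Smooth.

Unset Implicit Arguments.

Section DelayedPath.
Variables (m : nat) (n : 'I_m -> nat) (f : vec n -> R) (gradf : vec n -> vec n).
Variables (L : 'I_m -> R) (Lr : R) (tau : nat) (x : nat -> vec n) (ik : nat -> 'I_m)
  (J : pred nat) (k : nat).
Hypothesis hgrad : has_gradient f gradf.
Hypothesis hL : forall (i : 'I_m) (y z : vec n),
  bnorm (bsub (gradf (vadd z (Ublk i y)) i) (gradf z i)) <= L i * bnorm (y i).
Hypothesis hLr : forall (i : 'I_m) (y z : vec n),
  norm (vsub (gradf (vadd z (Ublk i y))) (gradf z)) <= Lr * bnorm (y i).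
Hypothesis hL0 : forall i, 0 <= L i.
Hypothesis hupd : forall p, (p < k)%N -> forall l, l != ik p -> forall j, x p.+1 l j = x p l j.
Hypothesis hJ : forall e, J e -> (e < k)%N /\ (k <= e + tau)%N.

(* [ypath 0] is the delayed read x̂^k and [ypath k] is x^k: [ypath p.+1] adds
   the increment x^{p+1} - x^p back to [ypath p] exactly when p is in J. *)
Definition ypath (p : nat) : vec n :=
  fun i j => x k i j + \big[Rplus/R0]_(p <= e < k | J e) (x e i j - x e.+1 i j).
Definition incr (s : nat) : vec n := vsub (x s.+1) (x s).
Definition delay_count (p : nat) : R := \big[Rplus/R0]_(0 <= s < p | J s) 1.
Definition delay_norm2 (p : nat) : R := \big[Rplus/R0]_(0 <= s < p | J s) norm2 (incr s).
Definition delay_wnorm2 (p : nat) : R :=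
  \big[Rplus/R0]_(0 <= s < p | J s) wnorm2 L (incr s).

Lemma ypath_succ p : (p < k)%N -> ypath p.+1 = if J p then vadd (ypath p) (incr p) else ypath p.
Proof.
move=> hp; case hJp: (J p); apply: vec_ext => i j;
  rewrite /ypath /vadd /incr /vsub (big_ltn_cond (m:=p) (n:=k) hp) hJp /=; ring.
Qed.

Lemma ypath_k : ypath k = x k.
Proof. by apply: vec_ext => i j; rewrite /ypath big_geq //; ring. Qed.

Lemma Ublk_incr p : (p < k)%N -> Ublk (ik p) (incr p) = incr p.
Proof. by move=> hp; apply: Ublk_vsub_id => l hl j; apply: hupd. Qed.

Lemma incr_descent p (z : vec n) : (p < k)%N ->
  f (vadd z (incr p)) <= f z + dot (gradf z) (incr p) + / 2 * wnorm2 L (incr p).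
Proof.
move=> hp; have := block_descent hgrad hL z (incr p) (ik p).
have -> : dot (gradf z) (incr p) = bdot (gradf z (ik p)) (incr p (ik p)).
  by rewrite -{1}(Ublk_incr p hp) dot_Ublk.
have -> : wnorm2 L (incr p) = L (ik p) * bnorm2 (incr p (ik p)).
  by rewrite -{1}(Ublk_incr p hp) wnorm2_Ublk.
rewrite (Ublk_incr p hp) /Rdiv; nra.
Qed.

Lemma incr_grad_lipschitz p (z : vec n) : (p < k)%N ->
  norm2 (vsub (gradf (vadd z (incr p))) (gradf z)) <= Lr * Lr * norm2 (incr p).
Proof.
move=> hp; have := hLr (ik p) (incr p) z; rewrite (Ublk_incr p hp).
have -> : norm2 (incr p) = bnorm2 (incr p (ik p)).
  by rewrite -{1}(Ublk_incr p hp) norm2_Ublk.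
by apply: le_of_sqrt_le; [exact: norm2_ge0 | exact: bnorm2_ge0].
Qed.

Lemma delay_count_ge0 p : 0 <= delay_count p.
Proof. by apply: sum_ge0 => s _; lra. Qed.

Lemma delay_norm2_ge0 p : 0 <= delay_norm2 p.
Proof. by apply: sum_ge0 => s _; apply: norm2_ge0. Qed.

Lemma delay_count_le p : (p <= k)%N -> delay_count p <= INR tau.
Proof.
move=> hp; apply: Rle_trans (sum_nat_le_prefix J (fun _ => Rle_0_1) hp) _.
apply: Rle_trans (sum_le_window (fun _ => Rle_0_1) (fun s hs => proj2 (hJ s hs))) _.
by rewrite big_const_nat iter_Rplus Rmult_1_r; apply: le_INR; apply/leP; lia.
Qed.

Lemma delay_norm2_le p : (p <= k)%N -> delay_norm2 p <= delay_norm2 k.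
Proof. by move=> hp; apply: sum_nat_le_prefix => // s; apply: norm2_ge0. Qed.

Lemma ypath_grad_dev p : (p <= k)%N ->
  norm2 (vsub (gradf (ypath p)) (gradf (ypath 0)))
    <= delay_count p * (Lr * Lr * delay_norm2 p).
Proof.
elim: p => [_|p IH hp].
  by rewrite norm2_sub_self /delay_count /delay_norm2 big_geq //; lra.
rewrite /delay_count /delay_norm2 !sum_nat_recr_cond -/(delay_count p) -/(delay_norm2 p).
rewrite (ypath_succ p hp); have {}IH := IH (ltnW hp).
case: (J p); last by lra.
have -> : vsub (gradf (vadd (ypath p) (incr p))) (gradf (ypath 0)) =
    vadd (vsub (gradf (ypath p)) (gradf (ypath 0)))
         (vsub (gradf (vadd (ypath p) (incr p))) (gradf (ypath p))).
  by apply: vec_ext => i j; rewrite /vadd /vsub; ring.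
have := norm2_add_le (delay_count_ge0 p) _ IH (incr_grad_lipschitz p (ypath p) hp).
have := delay_norm2_ge0 p; have := norm2_ge0 (incr p); nra.
Qed.

(* One delayed increment: the descent lemma at [ypath p], with the gradient
   there compared to the one at [ypath 0] by Cauchy-Schwarz and Young. *)
Lemma ypath_descent p : (p <= k)%N ->
  f (ypath p) - f (ypath 0) - dot (gradf (ypath 0)) (vsub (ypath p) (ypath 0))
    <= Rabs Lr / 2 * (delay_count p * delay_norm2 k + INR tau * delay_norm2 p)
       + / 2 * delay_wnorm2 p.
Proof.
elim: p => [_|p IH hp].
  rewrite dot_sub_self /delay_count [delay_norm2 0]/delay_norm2 /delay_wnorm2 !big_geq //.
  change R0 with 0; nra.
rewrite [delay_count _.+1]/delay_count [delay_norm2 _.+1]/delay_norm2.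
rewrite [delay_wnorm2 _.+1]/delay_wnorm2 !sum_nat_recr_cond.
rewrite -/(delay_count p) -/(delay_norm2 p) -/(delay_wnorm2 p) (ypath_succ p hp).
have {}IH := IH (ltnW hp).
have hN := delay_count_ge0 p; have hS := delay_norm2_ge0 p.
case: (J p); last by rewrite !Rplus_0_r.
set G := gradf (ypath 0); set b := norm2 (incr p).
have hb : 0 <= b by apply: norm2_ge0.
have -> : vsub (vadd (ypath p) (incr p)) (ypath 0) = vadd (vsub (ypath p) (ypath 0)) (incr p).
  by apply: vec_ext => i j; rewrite /vadd /vsub; ring.
rewrite dot_add_r.
have hdesc := incr_descent p (ypath p) hp.
have hcross : dot (gradf (ypath p)) (incr p) - dot G (incr p)
    <= Rabs Lr * (/ 2 * (delay_norm2 p + delay_count p * b)).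
  rewrite dot_sub_l; apply: Rle_trans (dot_cs _ _) _.
  have hg : norm (vsub (gradf (ypath p)) G) <= Rabs Lr * sqrt (delay_count p * delay_norm2 p).
    rewrite -sqrt_sq_scale; last nra.
    by apply: sqrt_le_1_alt; have := ypath_grad_dev p (ltnW hp); rewrite -/G; lra.
  apply: Rle_trans (Rmult_le_compat_r _ _ _ (sqrt_pos b) hg) _.
  rewrite Rmult_assoc; apply: Rmult_le_compat_l; first exact: Rabs_pos.
  exact: sqrt_young.
have hNt := delay_count_le p (ltnW hp).
have hSk := delay_norm2_le p (ltnW hp).
have : Rabs Lr * (delay_count p * b) <= Rabs Lr * (INR tau * b).
  by apply: Rmult_le_compat_l; [exact: Rabs_pos | nra].
have := Rabs_pos Lr; rewrite -/G in IH hdesc; nra.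
Qed.

Lemma delay_norm2_window :
  delay_norm2 k <= \big[Rplus/R0]_((k - tau)%N <= d < k) norm2 (vsub (x d.+1) (x d)).
Proof.
apply: sum_le_window => [s | s hs]; first exact: norm2_ge0.
exact: proj2 (hJ s hs).
Qed.

Lemma delay_wnorm2_window :
  delay_wnorm2 k <= \big[Rplus/R0]_((k - tau)%N <= d < k) wnorm2 L (vsub (x d.+1) (x d)).
Proof.
apply: sum_le_window => [s | s hs]; first exact: wnorm2_ge0.
exact: proj2 (hJ s hs).
Qed.

(* A negative [Lr] is only possible on the trivial space, where every norm vanishes. *)
Lemma Rabs_Lr_norm2 (y : vec n) : Rabs Lr * norm2 y = Lr * norm2 y.
Proof.
have [hLr0|hneg] := Rle_dec 0 Lr; first by rewrite Rabs_pos_eq.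
suff -> : norm2 y = 0 by ring.
rewrite /norm2 /dot big1 // => i _.
apply: (sqrt_eq_0 (bnorm2 (y i))); first exact: bnorm2_ge0.
have := hLr i y y; have := sqrt_pos (norm2 (vsub (gradf (vadd y (Ublk i y))) (gradf y))).
have := sqrt_pos (bnorm2 (y i)); rewrite /norm /bnorm; nra.
Qed.

Lemma delay_count_norm2_window :
  delay_count k * delay_norm2 k
    <= INR tau * \big[Rplus/R0]_((k - tau)%N <= d < k) norm2 (vsub (x d.+1) (x d)).
Proof.
apply: Rmult_le_compat; [exact: delay_count_ge0 | exact: delay_norm2_ge0 |
  exact: delay_count_le | exact: delay_norm2_window].
Qed.

Lemma grad_dev_window :
  norm2 (vsub (gradf (x k)) (gradf (ypath 0)))
    <= INR tau * (Lr * Lr * \big[Rplus/R0]_((k - tau)%N <= d < k) norm2 (vsub (x d.+1) (x d))).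
Proof.
have := ypath_grad_dev k (leqnn k); rewrite ypath_k => hdev.
apply: Rle_trans hdev _.
set St := \big[Rplus/R0]_(_ <= d < k) norm2 _.
have -> : INR tau * (Lr * Lr * St) = Lr * Lr * (INR tau * St) by ring.
have -> : delay_count k * (Lr * Lr * delay_norm2 k) = Lr * Lr * (delay_count k * delay_norm2 k)
  by ring.
by apply: Rmult_le_compat_l; [nra | exact: delay_count_norm2_window].
Qed.

Lemma descent_window :
  f (x k) - f (ypath 0) - dot (gradf (ypath 0)) (vsub (x k) (ypath 0))
    <= Lr * INR tau * \big[Rplus/R0]_((k - tau)%N <= d < k) norm2 (vsub (x d.+1) (x d))
       + / 2 * \big[Rplus/R0]_((k - tau)%N <= d < k) wnorm2 L (vsub (x d.+1) (x d)).
Proof.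
have := ypath_descent k (leqnn k); rewrite ypath_k => hdesc.
apply: Rle_trans hdesc _.
set St := \big[Rplus/R0]_(_ <= d < k) norm2 _.
have habs : Rabs Lr * St = Lr * St.
  by rewrite /St -!sumZ; apply: eq_bigr => d _; apply: Rabs_Lr_norm2.
have hsum : delay_count k * delay_norm2 k + INR tau * delay_norm2 k <= 2 * (INR tau * St).
  have := delay_count_norm2_window; rewrite -/St.
  have := Rmult_le_compat_l _ _ _ (pos_INR tau) delay_norm2_window; rewrite -/St; lra.
have := Rmult_le_compat_l _ _ _ (Rabs_pos Lr) hsum.
have := delay_wnorm2_window.
have -> : Lr * INR tau * St = INR tau * (Rabs Lr * St) by rewrite habs; ring.
rewrite /Rdiv; lra.
Qed.

End DelayedPath.

Section Expectation.
Variables (m : nat) (n : 'I_m -> nat) (f : vec n -> R) (gradf : vec n -> vec n).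
Variables (L : 'I_m -> R) (Lr : R) (tau : nat) (x : nat -> vec n) (ik : nat -> 'I_m)
  (J : pred nat) (k : nat) (xhat xx : vec n) (xnext : 'I_m -> vec n) (alpha : R).
Hypothesis hm : (0 < m)%N.
Hypothesis hconv : convex_fun f.
Hypothesis hgrad : has_gradient f gradf.
Hypothesis hL : forall (i : 'I_m) (y z : vec n),
  bnorm (bsub (gradf (vadd z (Ublk i y)) i) (gradf z i)) <= L i * bnorm (y i).
Hypothesis hLr : forall (i : 'I_m) (y z : vec n),
  norm (vsub (gradf (vadd z (Ublk i y))) (gradf z)) <= Lr * bnorm (y i).
Hypothesis hLpos : forall i, 0 < L i.
Hypothesis hupd : forall p, (p < k)%N -> forall l, l != ik p -> forall j, x p.+1 l j = x p l j.
Hypothesis hJ : forall e, J e -> (e < k)%N /\ (k <= e + tau)%N.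
Hypothesis hread : ypath m n x J k 0 = xhat.
Hypothesis hoff : forall j l, l != j -> forall jj, xnext j l jj = x k l jj.
Hypothesis halpha : 0 < alpha.

Lemma sum_expected_bound :
  \big[Rplus/R0]_(j < m) f (xnext j) - INR m * f xx - (INR m - 1) * (f (x k) - f xx)
  - / 2 * \big[Rplus/R0]_(j < m) wnorm2 (fun i => L i + alpha * Lmax L) (vsub (xnext j) (x k))
  - (Lr / Lmax L * Lr * INR tau / alpha + 2 * Lr * INR tau) / 2
      * \big[Rplus/R0]_((k - tau)%N <= d < k) norm2 (vsub (x d.+1) (x d))
  - / 2 * \big[Rplus/R0]_((k - tau)%N <= d < k) wnorm2 L (vsub (x d.+1) (x d))
  <= \big[Rplus/R0]_(j < m) bdot (gradf xhat j) (bsub (xnext j j) (xx j)).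
Proof.
have hL0 : forall i, 0 <= L i by move=> i; apply: Rlt_le.
have hLc : 0 < Lmax L by have := Lmax_ge L (Ordinal hm); have := hLpos (Ordinal hm); lra.
have hc : 0 < alpha * Lmax L by apply: Rmult_lt_0_compat.
have hblocks := sum_block_estimates hgrad hL xhat xx hc hoff.
have hconvex := convex_grad_le hgrad hconv xx xhat.
have hdev := grad_dev_window m n gradf Lr tau x ik J k hLr hupd hJ.
have hdescent := descent_window m n f gradf L Lr tau x ik J k hgrad hL hLr hL0 hupd hJ.
rewrite hread in hdev hdescent.
set St := \big[Rplus/R0]_(_ <= d < k) norm2 _ in hdev hdescent *.
have hyoung : / (2 * (alpha * Lmax L)) * norm2 (vsub (gradf (x k)) (gradf xhat))
    <= Lr / Lmax L * Lr * INR tau / alpha / 2 * St.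
  apply: Rle_trans (Rmult_le_compat_l _ _ _ _ hdev) _.
    by apply: Rlt_le; apply: Rinv_0_lt_compat; lra.
  by apply: Req_le; field; lra.
rewrite !dot_sub_r in hblocks hconvex hdescent.
lra.
Qed.

End Expectation.

Theorem mainTheorem9
  (m : nat) (n : 'I_m -> nat) (q : nat)
  (f : vec n -> R) (gradf : vec n -> vec n)
  (g : forall i : 'I_m, bvec (n i) -> option R)
  (A : forall i : 'I_m, 'I_q -> 'I_(n i) -> R) (b : 'I_q -> R)
  (L : 'I_m -> R) (Lr : R) (beta rho : R)
  (P : forall i : 'I_m, 'I_(n i) -> 'I_(n i) -> R)
  (tau : nat)
  (x xhat : nat -> vec n) (r lam : nat -> 'I_q -> R)
  (ik : nat -> 'I_m) (J : nat -> nat -> bool)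
  (k : nat) (xnext : 'I_m -> vec n) (alpha : R) (xx : vec n) :
  (0 < m)%N ->
  convex_fun f -> has_gradient f gradf -> continuous_map gradf ->
  (forall i, proper_fun (g i) /\ convex_ext (g i) /\ lsc_ext (g i)) ->
  (forall i, 0 < L i) ->
  (forall (i : 'I_m) (y z : vec n),
     bnorm (bsub (gradf (vadd z (Ublk i y)) i) (gradf z i)) <= L i * bnorm (y i)) ->
  (forall (i : 'I_m) (y z : vec n),
     norm (vsub (gradf (vadd z (Ublk i y))) (gradf z)) <= Lr * bnorm (y i)) ->
  0 < beta -> 0 < rho ->
  (forall i, sym_mx (P i) /\ psd_mx (P i)) ->
  (forall s, lam 0%N s = 0) ->
  (forall s, r 0%N s = Afull A (x 0%N) s - b s) ->
  (forall d : nat, (d < k)%N ->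
     x_update gradf g A P beta (ik d) (x d) (xhat d) (r d) (lam d) (x d.+1) /\
     (forall s, r d.+1 s = r d s + Amul (A (ik d)) (bsub (x d.+1 (ik d)) (x d (ik d))) s) /\
     (forall s, lam d.+1 s = lam d s - rho * r d.+1 s)) ->
  (forall d e : nat, (d <= k)%N -> J d e -> (e < d)%N /\ (d <= e + tau)%N) ->
  (forall d : nat, (d <= k)%N -> forall i j,
     xhat d i j = x d i j + \big[Rplus/R0]_(0 <= e < d | J d e) (x e i j - x e.+1 i j)) ->
  (forall j : 'I_m, x_update gradf g A P beta j (x k) (xhat k) (r k) (lam k) (xnext j)) ->
  0 < alpha ->
  let Lc := Lmax L in
  let kappa := Lr / Lc in
  Eik (fun j => bdot (gradf (xhat k) j) (bsub (xnext j j) (xx j)))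
  >= Eik (fun j => f (xnext j) - f xx)
     - (1 - / INR m) * (f (x k) - f xx)
     - / 2 * Eik (fun j => wnorm2 (fun i => L i + alpha * Lc) (vsub (xnext j) (x k)))
     - (kappa * Lr * INR tau / alpha + 2 * Lr * INR tau) / (2 * INR m)
         * \big[Rplus/R0]_((k - tau)%N <= d < k) norm2 (vsub (x d.+1) (x d))
     - / (2 * INR m)
         * \big[Rplus/R0]_((k - tau)%N <= d < k) wnorm2 L (vsub (x d.+1) (x d)).
Proof.
move=> hm hconv hgrad _ _ hLpos hL hLr _ _ _ _ _ hiter hdelay hxhat hnext halpha Lc kappa.
have hupd : forall p, (p < k)%N -> forall l, l != ik p -> forall j, x p.+1 l j = x p l j.
  by move=> p hp; case: (hiter p hp) => [[]].
have hJ : forall e, J k e -> (e < k)%N /\ (k <= e + tau)%N by move=> e; apply: hdelay.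
have hread : ypath m n x (J k) k 0 = xhat k.
  by apply: vec_ext => i j; rewrite (hxhat k (leqnn k)).
have hoff : forall j l, l != j -> forall jj, xnext j l jj = x k l jj.
  by move=> j; case: (hnext j).
have key := sum_expected_bound m n f gradf L Lr tau x ik (J k) k (xhat k) xx xnext alpha
  hm hconv hgrad hL hLr hLpos hupd hJ hread hoff halpha.
apply: Rle_ge; apply: (Rle_trans _ _ _ _ (Eik_ge hm key)).
have hm0 : INR m <> 0 by apply: not_0_INR; lia.
apply: Req_le; rewrite /Eik /kappa /Lc sum_sub_const_ord.
by set C := (Lr / Lmax L * Lr * INR tau / alpha + 2 * Lr * INR tau); field.
Qed.
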